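(* Let $m,n\in\mathbf{N}$. If there is a set family of shape $(m^n)$ and type $\lambda$, and $\mu$ is a partition with $\mu\rhd\lambda$ (strictly in the dominance order), then there are two distinct set families of shape $(m^n)$ and type $\mu$.
   Context: A set family of shape $(m^n)$ is a collection of $n$ distinct $m$-subsets of $\mathbf{N}=\{1,2,\dots\}$. If $\lambda$ is a partition with largest part $a$ and conjugate $\lambda'$, a set family has type $\lambda$ if for each $i\in\{1,\dots,a\}$ exactly $\lambda'_i$ of its sets contain $i$. *)

From mathcomp Require Import all_boot.
From mathcomp Require Import finmap.
Set Implicit Arguments. Unset Strict Implicit. Unset Printing Implicit Defensive.
Local Open Scope fset_scope.

Definition is_partition (l : seq nat) : bool :=
  sorted geq l && all (fun x => 0 < x) l.

Definition largest_part (l : seq nat) : nat := foldr maxn 0 l.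

Definition conj_part (l : seq nat) (i : nat) : nat := count (fun x => i <= x) l.

Definition dominates (mu la : seq nat) : Prop :=
  sumn mu = sumn la /\ forall k, sumn (take k la) <= sumn (take k mu).
Definition strictly_dominates (mu la : seq nat) : Prop :=
  dominates mu la /\ mu <> la.

(* A set family of shape (m^n): n distinct m-subsets of N = {1,2,...}. *)
Definition has_shape (m n : nat) (F : {fset {fset nat}}) : Prop :=
  #|` F| = n /\ forall S, S \in F -> #|` S| = m /\ 0 \notin S.

Definition has_type (la : seq nat) (F : {fset {fset nat}}) : Prop :=
  forall i, 1 <= i <= largest_part la ->
    #|` [fset S in F | i \in S]| = conj_part la i.

From mathcomp Require Import all_boot.
From mathcomp Require Import finmap.
From mathcomp Require Import zify.

(* Strict dominance is generated by moving one box from a row j to a higher row i of a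
   partition (Brylawski), and the total prefix mass strictly increases along such moves.
   A move changes the conjugate only at p = v_j (down by one) and q = v_i + 1 (up by
   one), and occ p >= occ q + 2 since rows i and j both have length in [p, q).
   Exchanging p for q in a member containing p but not q stays within families of shape
   (m^n) unless the exchanged set is already present; the sets S - p + q of the other
   kind inject into the members containing q but not p, so at least two members can be
   exchanged, giving two distinct families of the new type.  Since a type says nothing
   about labels beyond its largest part, those labels are first moved out of the way. *)

Set Implicit Arguments.
Unset Strict Implicit.
Unset Printing Implicit Defensive.

Definition psum (s : seq nat) k := sumn (take k s).

Lemma psum0 s : psum s 0 = 0.
Proof. by rewrite /psum take0. Qed.

Lemma psumS s k : psum s k.+1 = psum s k + nth 0 s k.
Proof.
by rewrite /psum; elim: s k => [|x s IH] [|k] //=; rewrite ?take0 ?IH /= ?addn0 ?addnA.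
Qed.

Lemma psum_oversize s k : size s <= k -> psum s k = sumn s.
Proof. by move=> le_sk; rewrite /psum take_oversize. Qed.

Lemma psum_le_sumn s k : psum s k <= sumn s.
Proof. by rewrite /psum -{2}(cat_take_drop k s) sumn_cat leq_addr. Qed.

Lemma nth_le_sumn s k : nth 0 s k <= sumn s.
Proof. by have := psum_le_sumn s k.+1; rewrite psumS; lia. Qed.

Lemma psum_cat_nseq0 s r k : psum (s ++ nseq r 0) k = psum s k.
Proof.
elim: k => [|k IH]; first by rewrite !psum0.
rewrite !psumS IH nth_cat nth_nseq if_same; case: ltnP => // le_sk.
by rewrite nth_default.
Qed.

Definition psum_total (s : seq nat) n := \sum_(k < n) psum s k.

(* [count_set_nth_ltn] without truncated subtraction. *)
Lemma count_set_nth_add (a : pred nat) s k y : k < size s ->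
  count a (set_nth 0 s k y) + a (nth 0 s k) = count a s + a y.
Proof. by elim: s k => [|x s IH] [|k] //= lt_ks; [lia | have := IH k lt_ks; lia]. Qed.

Definition move_box (s : seq nat) i j :=
  set_nth 0 (set_nth 0 s i (nth 0 s i).+1) j (nth 0 s j).-1.

Section MoveBox.
Variables (s : seq nat) (i j : nat).
Hypotheses (neq_ij : i != j) (lt_i : i < size s) (lt_j : j < size s).

Lemma size_move_box : size (move_box s i j) = size s.
Proof. by rewrite /move_box !size_set_nth; lia. Qed.

Lemma nth_move_box k : nth 0 (move_box s i j) k =
  if k == i then (nth 0 s i).+1 else if k == j then (nth 0 s j).-1 else nth 0 s k.
Proof.
rewrite /move_box !nth_set_nth /=.
have [->|_] := eqVneq k j; first by rewrite eq_sym (negbTE neq_ij).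
by rewrite nth_set_nth.
Qed.

Lemma conj_part_move_box x : 0 < nth 0 s j -> 0 < x ->
  conj_part (move_box s i j) x + (x == nth 0 s j) = conj_part s x + (x == (nth 0 s i).+1).
Proof.
move=> pos_j pos_x; rewrite /conj_part /move_box; change (fun y => x <= y) with (leq x).
have lt_j' : j < size (set_nth 0 s i (nth 0 s i).+1) by rewrite size_set_nth; lia.
have := count_set_nth_add (leq x) (nth 0 s j).-1 lt_j'.
have := count_set_nth_add (leq x) (nth 0 s i).+1 lt_i.
rewrite nth_set_nth /= eq_sym (negbTE neq_ij); lia.
Qed.

Lemma psum_move_box k : 0 < nth 0 s j ->
  psum (move_box s i j) k + (j < k) = psum s k + (i < k).
Proof.
move=> pos_j; elim: k => [|k IH]; first by rewrite !psum0.
rewrite !psumS nth_move_box !ltnS; move: IH.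
by case: eqVneq => [->|ne_ki]; [|case: eqVneq => [->|ne_kj]]; lia.
Qed.

Lemma sumn_move_box : 0 < nth 0 s j -> sumn (move_box s i j) = sumn s.
Proof.
move=> pos_j; have := psum_move_box (size s) pos_j.
by rewrite !psum_oversize ?size_move_box // lt_i lt_j; lia.
Qed.

Lemma psum_total_move_box n : 0 < nth 0 s j -> i < j -> i.+1 < n ->
  psum_total s n < psum_total (move_box s i j) n.
Proof.
move=> pos_j lt_ij lt_i1n.
have le_psum k : psum s k <= psum (move_box s i j) k by have := psum_move_box k pos_j; lia.
have lt_psum : psum s i.+1 < psum (move_box s i j) i.+1.
  by have := psum_move_box i.+1 pos_j; lia.
rewrite /psum_total (bigD1 (Ordinal lt_i1n)) // [X in _ < X](bigD1 (Ordinal lt_i1n)) //=.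
by rewrite -addSn; apply: leq_add => //; apply: leq_sum => k _; exact: le_psum.
Qed.

End MoveBox.

Lemma conj_part_split s p q : p <= q ->
  conj_part s p = conj_part s q + count (fun y => p <= y < q) s.
Proof. by move=> le_pq; rewrite /conj_part; elim: s => //= y s ->; lia. Qed.

Lemma conj_part_gap s i j : i != j -> i < size s -> j < size s -> nth 0 s j <= nth 0 s i ->
  conj_part s (nth 0 s i).+1 + 2 <= conj_part s (nth 0 s j).
Proof.
move=> neq_ij lt_i lt_j le_ji.
pose between y := nth 0 s j <= y < (nth 0 s i).+1.
rewrite (conj_part_split s (leqW le_ji)) -/between.
suff : 1 < count between s by lia.
have lt_j' : j < size (set_nth 0 s i (nth 0 s i).+1) by rewrite size_set_nth; lia.
have := count_set_nth_add between (nth 0 s i).+1 lt_i.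
have := count_set_nth_add between (nth 0 s i).+1 lt_j'.
by rewrite nth_set_nth /= eq_sym (negbTE neq_ij) /between; lia.
Qed.

Lemma conj_part_over l x : largest_part l < x -> conj_part l x = 0.
Proof.
rewrite /conj_part /largest_part; elim: l => //= y l IH.
by rewrite gtn_max => /andP [lt_yx /IH ->]; rewrite leqNgt lt_yx.
Qed.

Lemma largest_part_le_sumn l : largest_part l <= sumn l.
Proof. by rewrite /largest_part; elim: l => //= y l IH; rewrite geq_max leq_addr /=; lia. Qed.

Lemma conj_part_cat_nseq0 s r x : 0 < x -> conj_part (s ++ nseq r 0) x = conj_part s x.
Proof.
by move=> pos_x; rewrite /conj_part count_cat count_nseq /= leqn0 (negbTE (lt0n_neq0 pos_x)) addn0.
Qed.

Definition nonincreasing (s : seq nat) :=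
  forall a b, a <= b -> b < size s -> nth 0 s b <= nth 0 s a.

Lemma sorted_nonincreasing s : sorted geq s -> nonincreasing s.
Proof.
move=> sorted_s a b le_ab lt_b.
have geq_trans : transitive geq by move=> y x z le_yx le_zy; exact: leq_trans le_zy le_yx.
have geq_refl : reflexive geq by move=> x; exact: leqnn.
by apply: (sorted_leq_nth geq_trans geq_refl) => //; rewrite inE; lia.
Qed.

Definition movable (s : seq nat) i j :=
  [&& i < j, j < size s, 0 < nth 0 s j & nth 0 s j <= nth 0 s i].

Lemma move_box_nonincreasing s i j : nonincreasing s -> i < j < size s ->
  (forall a, a < i -> nth 0 s i < nth 0 s a) ->
  (forall b, j < b < size s -> nth 0 s b < nth 0 s j) ->
  nonincreasing (move_box s i j).
Proof.
move=> noninc_s /andP [lt_ij lt_j] top_i bottom_j a b le_ab.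
have neq_ij : i != j by rewrite neq_ltn lt_ij.
rewrite size_move_box ?(ltn_trans lt_ij) // => lt_b.
rewrite !nth_move_box ?(ltn_trans lt_ij) //.
have := noninc_s a b le_ab lt_b.
case: (eqVneq b i) => [eq_bi|ne_bi]; case: (eqVneq a i) => [eq_ai|ne_ai];
  case: (eqVneq b j) => [eq_bj|ne_bj]; case: (eqVneq a j) => [eq_aj|ne_aj] //=; subst; try lia.
- by have := top_i a; lia.
- by have := bottom_j b; lia.
Qed.

Definition dominated (v t : seq nat) := forall k, psum v k <= psum t k.

Lemma dominated_gap_interval v t : size v = size t -> dominated v t -> sumn v = sumn t ->
  v <> t -> exists i j, [/\ i < j < size v, forall k, k <= i -> psum v k = psum t k,
    forall k, i < k <= j -> psum v k < psum t k & psum v j.+1 = psum t j.+1].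
Proof.
move=> eq_size dom_vt eq_sum neq_vt.
have [i diff_i min_i] : {i | nth 0 v i != nth 0 t i & forall k, nth 0 v k != nth 0 t k -> i <= k}.
  apply: find_ex_minn.
  have /existsP [k] : [exists k : 'I_(size v), nth 0 v k != nth 0 t k]; last by exists k.
  apply: contraT => /existsPn all_eq; case: neq_vt.
  by apply: (eq_from_nth (x0 := 0)) => // k lt_k; apply/eqP/negPn/(all_eq (Ordinal lt_k)).
have eq_upto_i k : k <= i -> psum v k = psum t k.
  elim: k => [|k IH] le_ki; rewrite ?psum0 // !psumS IH ?(ltnW le_ki) //.
  by congr (_ + _); apply/eqP; apply: contraTT le_ki => /min_i; rewrite -leqNgt.
have lt_at_i : psum v i.+1 < psum t i.+1.
  have := dom_vt i.+1; rewrite !psumS eq_upto_i //.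
  by move: diff_i; rewrite neq_ltn; case/orP; lia.
have lt_i1 : i.+1 < size v.
  have lt_i : i < size v.
    by rewrite ltnNge; apply: contra diff_i => le_vi; rewrite !nth_default -?eq_size.
  rewrite ltn_neqAle lt_i andbT; apply/eqP => eq_i1.
  by move: lt_at_i; rewrite !psum_oversize -?eq_size -?eq_i1 // eq_sum ltnn.
have [j /andP [lt_ij /eqP eq_j1] min_j] :
    {j | (i < j) && (psum v j.+1 == psum t j.+1)
       & forall k, (i < k) && (psum v k.+1 == psum t k.+1) -> j <= k}.
  apply: find_ex_minn; exists (size v).-1.
  by rewrite prednK ?psum_oversize -?eq_size ?eq_sum ?eqxx; lia.
have lt_j : j < size v.
  by have := min_j (size v).-1; rewrite prednK ?psum_oversize -?eq_size ?eq_sum ?eqxx; lia.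
exists i, j; split => //; first by rewrite lt_ij.
case=> // k /andP [lt_ik le_kj]; have [->|ne_ki] := eqVneq k i => //.
rewrite ltn_neqAle dom_vt andbT; apply/eqP => eq_k1.
by have := min_j k; rewrite eq_k1 eqxx andbT; lia.
Qed.

Lemma dominated_cover v t : size v = size t -> nonincreasing v -> nonincreasing t ->
  dominated v t -> sumn v = sumn t -> v <> t ->
  exists i j, [/\ movable v i j, nonincreasing (move_box v i j), dominated (move_box v i j) t
    & psum_total v (size v) < psum_total (move_box v i j) (size v)].
Proof.
move=> eq_size noninc_v noninc_t dom_vt eq_sum neq_vt.
have [i [j [/andP [lt_ij lt_j] eq_upto_i lt_between eq_j1]]] :=
  dominated_gap_interval eq_size dom_vt eq_sum neq_vt.
have lt_i : i < size v := ltn_trans lt_ij lt_j.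
have neq_ij : i != j by rewrite neq_ltn lt_ij.
have vi_lt_ti : nth 0 v i < nth 0 t i.
  by have := lt_between i.+1; rewrite !psumS eq_upto_i // ltnSn lt_ij; lia.
have tj_lt_vj : nth 0 t j < nth 0 v j.
  by have := lt_between j; move: eq_j1; rewrite !psumS lt_ij leqnn; lia.
have top_i a : a < i -> nth 0 v i < nth 0 v a.
  move=> lt_ai; have i_pos : 0 < i by lia.
  have : nth 0 v i.-1 = nth 0 t i.-1.
    have := eq_upto_i i (leqnn i).
    by rewrite -{1 2}(prednK i_pos) !psumS eq_upto_i ?leq_pred //; lia.
  have := noninc_v a i.-1; have := noninc_t i.-1 i; rewrite -?eq_size; lia.
have bottom_j b : j < b < size v -> nth 0 v b < nth 0 v j.
  move=> /andP [lt_jb lt_b].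
  have : nth 0 v j.+1 <= nth 0 t j.+1.
    by have := dom_vt j.+2; rewrite (psumS v j.+1) (psumS t j.+1) eq_j1; lia.
  have := noninc_v j.+1 b; have := noninc_t j j.+1; rewrite -?eq_size; lia.
have pos_j : 0 < nth 0 v j by lia.
exists i, j; split.
- by rewrite /movable lt_ij lt_j pos_j (noninc_v i j) // ltnW.
- by apply: move_box_nonincreasing => //; rewrite lt_ij.
- move=> k; have := psum_move_box neq_ij lt_i lt_j k pos_j; have := dom_vt k.
  by have [/lt_between|] := boolP (i < k <= j); lia.
- by apply: psum_total_move_box => //; lia.
Qed.

Lemma dominated_last_move (P : seq nat -> Prop) v t :
  size v = size t -> nonincreasing v -> nonincreasing t -> dominated v t -> sumn v = sumn t ->
  v <> t -> P v -> (forall w i j, movable w i j -> sumn w = sumn t -> P w -> P (move_box w i j)) ->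
  exists w i j, [/\ P w, sumn w = sumn t, movable w i j & move_box w i j = t].
Proof.
move=> + + noninc_t + + + + P_move.
pose gap w := psum_total t (size t) - psum_total w (size t).
have [d] := ubnP (gap v).
elim: d v => // d IH v lt_gap eq_size noninc_v dom_vt eq_sum neq_vt Pv.
have [i [j [mov_ij noninc_w dom_w lt_total]]] :=
  dominated_cover eq_size noninc_v noninc_t dom_vt eq_sum neq_vt.
have [eq_wt|neq_wt] := eqVneq (move_box v i j) t; first by exists v, i, j.
move: (mov_ij) => /and4P [lt_ij lt_j pos_j _].
have lt_i : i < size v := ltn_trans lt_ij lt_j.
have neq_ij : i != j by rewrite neq_ltn lt_ij.
have eq_size_w := size_move_box neq_ij lt_i lt_j.
apply: (IH (move_box v i j)); rewrite ?eq_size_w ?sumn_move_box //; last exact: P_move.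
- have : psum_total (move_box v i j) (size t) <= psum_total t (size t).
    by apply: leq_sum => k _; exact: dom_w.
  by move: lt_total lt_gap; rewrite /gap eq_size; lia.
- exact/eqP.
Qed.

Local Open Scope fset_scope.

Definition occ (G : {fset {fset nat}}) x := #|` [fset S in G | x \in S]|.

Lemma occ_fsetU1 G T x : T \notin G -> occ (T |` G) x = ((x \in T) + occ G x)%N.
Proof.
move=> T_notin; rewrite /occ; case: (boolP (x \in T)) => x_T.
  have -> : [fset S in T |` G | x \in S] = T |` [fset S in G | x \in S].
    by apply/fsetP => S; rewrite !inE; case: (eqVneq S T) => [->|].
  by rewrite cardfsU1 !inE (negbTE T_notin).
congr #|` _|; apply/fsetP => S; rewrite !inE.
by case: (eqVneq S T) => [->|]; rewrite ?(negbTE x_T) ?andbF.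
Qed.

Lemma occ_fsetD1 G R x : R \in G -> occ G x = ((x \in R) + occ (G `\ R) x)%N.
Proof. by move=> R_in; rewrite -occ_fsetU1 ?inE ?eqxx // fsetD1K. Qed.

Definition fset_swap p q (S : {fset nat}) := q |` (S `\ p).

Definition family_swap p q (G : {fset {fset nat}}) R := fset_swap p q R |` (G `\ R).

Lemma card_fset_split (T : choiceType) (X : {fset T}) (P : pred T) :
  #|` X| = (#|` [fset S in X | P S]| + #|` [fset S in X | ~~ P S]|)%N.
Proof.
rewrite -(cardfsID [fset S in X | P S] X); congr (_ + _)%N; congr #|` _|;
  by apply/fsetP => S; rewrite !inE; case: (S \in X); case: (P S).
Qed.

Lemma occ_split G p q : occ G p =
  (#|` [fset S in G | (p \in S) && (q \in S)]| + #|` [fset S in G | (p \in S) && (q \notin S)]|)%N.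
Proof.
rewrite /occ (card_fset_split _ (fun S : {fset nat} => q \in S)); congr (_ + _)%N; congr #|` _|;
  by apply/fsetP => S; rewrite !inE andbA.
Qed.

Lemma fset_swap_inj p q :
  {in [pred S : {fset nat} | (p \in S) && (q \notin S)] &, injective (fset_swap p q)}.
Proof.
move=> S T /andP [p_S q_S] /andP [p_T q_T] /fsetP eq_swap; apply/fsetP => x.
have := eq_swap x; rewrite /fset_swap !inE.
have [->|_] := eqVneq x p; first by rewrite p_S p_T.
by have [->|_] := eqVneq x q; first by rewrite (negbTE q_S) (negbTE q_T).
Qed.

Lemma card_swappable G p q : p != q -> (occ G q + 2 <= occ G p)%N ->
  1 < #|` [fset S in G | [&& p \in S, q \notin S & fset_swap p q S \notin G]]|.
Proof.
move=> neq_pq gap_pq.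
set A := [fset S in G | (p \in S) && (q \notin S)].
set B := [fset S in G | (q \in S) && (p \notin S)].
set W := [fset S in A | ~~ (fset_swap p q S \notin G)].
have -> : [fset S in G | [&& p \in S, q \notin S & fset_swap p q S \notin G]] =
    [fset S in A | fset_swap p q S \notin G].
  by apply/fsetP => S; rewrite !inE !andbA.
have le_WB : #|` W| <= #|` B|.
  have inj_W : {in W &, injective (fset_swap p q)}.
    move=> S T; rewrite !inE => /andP [/andP [_ S_A] _] /andP [/andP [_ T_A] _].
    exact: fset_swap_inj.
  have card_img : #|` fset_swap p q @` W| = #|` W| by apply/eqP/card_in_imfsetP.
  rewrite -card_img; apply: fsubset_leq_card.
  apply/fsubsetP => U /imfsetP [S]; rewrite !inE negbK.
  move=> /andP [/andP [_ /andP [_ q_S]] swap_in] ->.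
  by rewrite swap_in /fset_swap !inE !eqxx /= (negbTE neq_pq).
have := card_fset_split A (fun S => fset_swap p q S \notin G); rewrite -/W.
set V := [fset S in A | _]; set C := [fset S in G | (p \in S) && (q \in S)].
have := occ_split G p q; rewrite -/A -/C.
have := occ_split G q p.
have -> : [fset S in G | (q \in S) && (p \in S)] = C.
  by apply/fsetP => S; rewrite !inE; case: (p \in S); case: (q \in S); rewrite ?andbF.
rewrite -/B; move: le_WB gap_pq.
move: (occ G p) (occ G q) #|` A| #|` B| #|` C| #|` V| #|` W|; lia.
Qed.

Section FamilySwap.
Variables (p q : nat) (G : {fset {fset nat}}) (R : {fset nat}).
Hypotheses (neq_pq : p != q) (R_in : R \in G) (p_in : p \in R) (q_notin : q \notin R)
  (swap_notin : fset_swap p q R \notin G).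

Lemma occ_family_swap x : (occ (family_swap p q G R) x + (x == p) = occ G x + (x == q))%N.
Proof.
rewrite /family_swap occ_fsetU1; last by rewrite !inE negb_and swap_notin orbT.
rewrite (occ_fsetD1 x R_in) /fset_swap !inE.
move: (occ _ x) => c.
have [->|_] := eqVneq x p; first by rewrite p_in (negbTE neq_pq) /=; lia.
have [->|_] := eqVneq x q; first by rewrite (negbTE q_notin) /=; lia.
by case: (x \in R) => /=; lia.
Qed.

Lemma has_shape_family_swap m n : 0 < q -> has_shape m n G -> has_shape m n (family_swap p q G R).
Proof.
move=> pos_q [card_G shape_G]; split.
  rewrite cardfsU1 !inE negb_and swap_notin orbT /=.
  by rewrite -card_G (cardfsD1 R G) R_in.
move=> S; rewrite !inE => /orP [/eqP ->|/andP [_ /shape_G] //].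
have [card_R zero_R] := shape_G R R_in.
rewrite /fset_swap cardfsU1 !inE (negbTE q_notin) andbF /= -card_R (cardfsD1 p R) p_in.
split => //; rewrite (negbTE zero_R) andbF orbF; lia.
Qed.

End FamilySwap.

Lemma two_family_swaps m n G p q : has_shape m n G -> p != q -> 0 < q ->
  (occ G q + 2 <= occ G p)%N ->
  exists G1 G2, [/\ G1 <> G2, has_shape m n G1, has_shape m n G2,
    forall x, (occ G1 x + (x == p) = occ G x + (x == q))%N &
    forall x, (occ G2 x + (x == p) = occ G x + (x == q))%N].
Proof.
move=> shape_G neq_pq pos_q gap_pq.
have := card_swappable neq_pq gap_pq; set V := [fset S in G | _] => card_V.
have [R1 R1_V] : exists R, R \in V by apply/fset0Pn; rewrite -cardfs_gt0 ltnW.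
have [R2 R2_V] : exists R, R \in V `\ R1.
  by apply/fset0Pn; rewrite -cardfs_gt0; move: card_V; rewrite (cardfsD1 R1 V) R1_V.
move: R2_V; rewrite in_fsetD1 => /andP [neq_R21].
move: R1_V; rewrite !inE => /andP [R1_G /and3P [p_R1 q_R1 swap_R1]].
move=> /andP [R2_G /and3P [p_R2 q_R2 swap_R2]].
exists (family_swap p q G R1), (family_swap p q G R2); split.
- move=> eq_G12; have : R2 \in family_swap p q G R1 by rewrite !inE neq_R21 R2_G orbT.
  rewrite eq_G12 !inE eqxx orbF => /eqP eq_R2.
  by move: p_R2; rewrite eq_R2 /fset_swap !inE eqxx (negbTE neq_pq).
- exact: has_shape_family_swap.
- exact: has_shape_family_swap.
- exact: occ_family_swap.
- exact: occ_family_swap.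
Qed.

Definition typed_upto K (v : seq nat) G := forall x, 0 < x <= K -> occ G x = conj_part v x.

Lemma typed_upto_move_box K m n v i j G : has_shape m n G -> typed_upto K v G ->
  movable v i j -> sumn v <= K ->
  exists G1 G2, [/\ G1 <> G2, has_shape m n G1, typed_upto K (move_box v i j) G1,
    has_shape m n G2 & typed_upto K (move_box v i j) G2].
Proof.
move=> shape_G typed_G /and4P [lt_ij lt_j pos_j le_ji] sum_K.
have lt_i : i < size v := ltn_trans lt_ij lt_j.
have neq_ij : i != j by rewrite neq_ltn lt_ij.
have le_qK : (nth 0 v i).+1 <= K.
  have := nth_le_sumn (move_box v i j) i.
  by rewrite sumn_move_box // nth_move_box // eqxx; lia.
have neq_pq : nth 0 v j != (nth 0 v i).+1 by rewrite neq_ltn ltnS le_ji.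
have gap_pq : (occ G (nth 0 v i).+1 + 2 <= occ G (nth 0 v j))%N.
  by rewrite !typed_G ?conj_part_gap //; lia.
have typed_swap G' : (forall x, occ G' x + (x == nth 0 v j) = occ G x + (x == (nth 0 v i).+1))%N ->
    typed_upto K (move_box v i j) G'.
  move=> occ_G' x /andP [pos_x le_xK]; have := occ_G' x.
  have := conj_part_move_box neq_ij lt_i lt_j pos_j pos_x.
  by rewrite typed_G ?pos_x //; lia.
have [G1 [G2 [neq_G12 shape_G1 shape_G2 occ_G1 occ_G2]]] :=
  two_family_swaps shape_G neq_pq isT gap_pq.
by exists G1, G2; split; auto.
Qed.

Definition relabel (f : nat -> nat) (F : {fset {fset nat}}) := [fset f @` S | S : {fset nat} in F].

Lemma occ_relabel_out f F x : (forall y, f y != x) -> occ (relabel f F) x = 0.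
Proof.
move=> not_image; rewrite /occ (_ : [fset _ in _ | _] = fset0) ?cardfs0 //.
apply/fsetP => T; rewrite !inE; apply/negP => /andP [/imfsetP [S _ ->] /imfsetP [y _ eq_xy]].
by move: (not_image y); rewrite eq_xy eqxx.
Qed.

Section Relabel.
Variables (f : nat -> nat) (F : {fset {fset nat}}).
Hypothesis inj_f : injective f.

Lemma mem_imfset_inj (S : {fset nat}) x : (f x \in f @` S) = (x \in S).
Proof. exact: mem_imfset. Qed.

Lemma imfset_inj : injective (fun S : {fset nat} => f @` S).
Proof.
move=> S T eq_fST; apply/fsetP => x.
by rewrite -[x \in S]mem_imfset_inj -[x \in T]mem_imfset_inj eq_fST.
Qed.

Lemma card_relabel (X : {fset {fset nat}}) : #|` relabel f X| = #|` X|.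
Proof. by rewrite card_imfset //; exact: imfset_inj. Qed.

Lemma has_shape_relabel m n : f 0 = 0 -> has_shape m n F -> has_shape m n (relabel f F).
Proof.
move=> f0 [card_F shape_F]; split; first by rewrite card_relabel.
move=> _ /imfsetP [S S_F ->]; have [card_S zero_S] := shape_F S S_F.
by rewrite card_imfset // -f0 mem_imfset_inj.
Qed.

Lemma occ_relabel x : occ (relabel f F) (f x) = occ F x.
Proof.
rewrite /occ -[RHS]card_relabel; congr #|` _|; apply/fsetP => T; rewrite !inE.
apply/andP/imfsetP => [[/imfsetP [S S_F ->] fx_S]|[S]].
  by exists S; rewrite // !inE S_F -[x \in S]mem_imfset_inj.
rewrite !inE => /andP [S_F x_S] ->; rewrite mem_imfset_inj x_S.
by split => //; apply/imfsetP; exists S.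
Qed.

End Relabel.

Lemma relabel_typed_upto m n la F K : has_shape m n F -> has_type la F ->
  largest_part la <= K -> exists G, has_shape m n G /\ typed_upto K la G.
Proof.
move=> shape_F type_F le_aK; pose f x := if x <= largest_part la then x else (x + K)%N.
have inj_f : injective f.
  by move=> x y; rewrite /f; case: (leqP x); case: (leqP y); lia.
exists (relabel f F); split; first exact: has_shape_relabel.
move=> x /andP [pos_x le_xK]; have [le_xa|lt_ax] := leqP x (largest_part la).
  have fx : f x = x by rewrite /f le_xa.
  by have := occ_relabel F inj_f x; rewrite fx => ->; apply: type_F; rewrite pos_x.
by rewrite conj_part_over // occ_relabel_out // => y; rewrite /f; case: leqP; lia.
Qed.

Lemma nonincreasing_cat_nseq0 s r : nonincreasing s -> nonincreasing (s ++ nseq r 0).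
Proof.
move=> noninc_s a b le_ab; rewrite size_cat size_nseq !nth_cat nth_nseq => lt_b.
case: (ltnP b (size s)) => [lt_bs|_]; last by rewrite if_same.
by rewrite (leq_ltn_trans le_ab lt_bs) noninc_s.
Qed.

Lemma size_dominating mu la : all (fun x => 0 < x) mu -> dominates mu la -> size mu <= size la.
Proof.
move=> pos_mu [eq_sum dom_mula]; rewrite leqNgt; apply/negP => lt_size.
have := dom_mula (size la); rewrite take_size -/(psum mu (size la)).
have := psum_le_sumn mu (size la).+1; rewrite psumS.
have : 0 < nth 0 mu (size la) by apply: (allP pos_mu); exact: mem_nth.
lia.
Qed.

Lemma typed_upto_has_type K s r G : largest_part s <= K ->
  typed_upto K (s ++ nseq r 0) G -> has_type s G.
Proof.
move=> le_aK typed_G x /andP [pos_x le_xa].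
by rewrite -/(occ G x) typed_G ?conj_part_cat_nseq0 // pos_x (leq_trans le_xa).
Qed.

Lemma strictly_dominates_padded la mu : is_partition la -> is_partition mu ->
  strictly_dominates mu la -> let t := mu ++ nseq (size la - size mu) 0 in
  [/\ size la = size t, nonincreasing t, dominated la t, sumn la = sumn t & la <> t].
Proof.
move=> /andP [sorted_la pos_la] /andP [sorted_mu pos_mu] [dom_mula neq_mula] t.
have le_size := size_dominating pos_mu dom_mula.
split.
- by rewrite size_cat size_nseq; lia.
- exact: nonincreasing_cat_nseq0 (sorted_nonincreasing sorted_mu).
- by move=> k; rewrite psum_cat_nseq0; exact: dom_mula.2.
- by rewrite sumn_cat sumn_nseq mul0n addn0 dom_mula.1.
move=> eq_lat; have [eq_r|pos_r] := posnP (size la - size mu).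
  by apply: neq_mula; rewrite eq_lat /t eq_r cats0.
by move/allP: pos_la => /(_ 0); rewrite eq_lat mem_cat mem_nseq pos_r eqxx orbT => /(_ isT).
Qed.

Theorem proposition5p1 (m n : nat) (la mu : seq nat) :
  is_partition la -> is_partition mu ->
  (exists F : {fset {fset nat}}, has_shape m n F /\ has_type la F) ->
  strictly_dominates mu la ->
  exists F1 F2 : {fset {fset nat}},
    F1 <> F2 /\ has_shape m n F1 /\ has_type mu F1 /\
    has_shape m n F2 /\ has_type mu F2.
Proof.
move=> /[dup] part_la /andP [/sorted_nonincreasing noninc_la _] part_mu [F [shape_F type_F]] sdom.
have [size_t noninc_t dom_t sum_t neq_lat] := strictly_dominates_padded part_la part_mu sdom.
set t := mu ++ _ in size_t noninc_t dom_t sum_t neq_lat.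
pose typed w := exists G, has_shape m n G /\ typed_upto (sumn la) w G.
have typed_step w i j : movable w i j -> sumn w = sumn t -> typed w -> typed (move_box w i j).
  move=> mov_ij sum_w [G [shape_G typed_G]].
  have [|G1 [_ [_ shape_G1 typed_G1 _ _]]] := typed_upto_move_box shape_G typed_G mov_ij.
    by rewrite sum_w -sum_t.
  by exists G1.
have [w [i [j [[G [shape_G typed_G]] sum_w mov_ij eq_wt]]]] :=
  dominated_last_move (P := typed) size_t noninc_la noninc_t dom_t sum_t neq_lat
    (relabel_typed_upto shape_F type_F (largest_part_le_sumn la)) typed_step.
have [|G1 [G2 [neq_G12 shape_G1 typed_G1 shape_G2 typed_G2]]] :=
  typed_upto_move_box shape_G typed_G mov_ij; first by rewrite sum_w -sum_t.
have le_mu : largest_part mu <= sumn la by rewrite -sdom.1.1 largest_part_le_sumn.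
rewrite eq_wt in typed_G1 typed_G2.
exists G1, G2; do !split => //.
  exact: typed_upto_has_type le_mu typed_G1.
exact: typed_upto_has_type le_mu typed_G2.
Qed.
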